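(* Let $A\in\mathbb{R}^{n\times n}$, $B\in\mathbb{R}^{n\times p}$ with $(A,B)$ controllable, let $P$ be a positive definite matrix such that for some $\epsilon>0$, $(x-y)^TP\{A(x-y)-P^{-1}BB^T(x-y)\}\le-\epsilon(x-y)^T(x-y)$ for all $x,y$. Let $L=(l_{ij})\in\mathbb{R}^{m\times m}$ be irreducible with $\mathrm{Rank}(L)=m-1$, $l_{ij}\ge0$ for $i\ne j$, $\sum_jl_{ij}=0$, let $\varepsilon>0$, and let $s(t)$ satisfy $\dot s(t)=As(t)$. Consider $$\frac{dx_1(t)}{dt}=Ax_1(t)+c\sum_{j=1}^ml_{1j}P^{-1}BB^Tx_j(t)-c\varepsilon(x_1(t)-s(t)),$$ $$\frac{dx_i(t)}{dt}=Ax_i(t)+c\sum_{j=1}^ml_{ij}P^{-1}BB^Tx_j(t),\qquad i=2,\dots,m.$$ Then for sufficiently large constant $c$ the system reaches consensus to the trajectory $s(t)$, i.e. $x_i(t)-s(t)\to0$ for all $i$. *)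

From HB Require Import structures.
From mathcomp Require Import all_boot all_order all_algebra.
From mathcomp Require Import all_classical all_reals all_analysis.
Set Implicit Arguments. Unset Strict Implicit. Unset Printing Implicit Defensive.
Import Order.TTheory GRing.Theory Num.Theory.
Import numFieldNormedType.Exports.
Local Open Scope ring_scope.

Definition controllable (R : fieldType) (n p : nat)
    (A : 'M[R]_n) (B : 'M[R]_(n, p)) : Prop :=
  \rank (\mxrow_(k < n) (A ^+ k *m B)) = n.

Definition posdef (R : numFieldType) (n : nat) (P : 'M[R]_n) : Prop :=
  P^T = P /\ forall x : 'cV[R]_n, x != 0 -> 0 < (x^T *m P *m x) ord0 ord0.

Definition reducible (R : pzRingType) (m : nat) (L : 'M[R]_m) : Prop :=
  exists S : {set 'I_m}, [/\ S != finset.set0, S != [set: 'I_m] &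
    forall i j, i \in S -> j \notin S -> L i j = 0].
Definition irreducible_mx (R : pzRingType) (m : nat) (L : 'M[R]_m) : Prop :=
  ~ reducible L.

From HB Require Import structures.
From mathcomp Require Import all_boot all_order all_algebra.
From mathcomp Require Import all_classical all_reals all_analysis.
From mathcomp Require Import ring lra.

(* Let xi > 0 be a left null vector of L (Perron-Frobenius for the irreducible
   Metzler matrix L of corank one) and let e_j = x_j - s be the errors, which
   obey the same system with target 0. Along solutions, the Lyapunov function
   V = sum_j xi_j e_j^T P e_j has a drift part bounded, by the hypothesis on P,
   by 2 sum_j xi_j e_j^T BB^T e_j - 2 eps sum_j xi_j |e_j|^2; since xi^T L = 0
   and L 1 = 0, coupling and pinning add
   - c (sum_ij xi_i l_ij (e_i - e_j)^T BB^T (e_i - e_j) + 2 veps xi_1 e_1^T P e_1).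
   By irreducibility this quantity bounds every e_j^T BB^T e_j up to a
   constant factor, so for large c we get
   V' <= -2 eps sum_j xi_j |e_j|^2 <= -delta V, hence V -> 0 and e_j -> 0. *)

Set Implicit Arguments.
Unset Strict Implicit.
Unset Printing Implicit Defensive.

Import Order.TTheory GRing.Theory Num.Theory.
Import numFieldNormedType.Exports.
Local Open Scope ring_scope.

Section BilinearForm.
Variables (R : comPzRingType) (n : nat).
Implicit Types (M : 'M[R]_n) (u v w : 'cV[R]_n).

Definition bform M u v : R := (u^T *m M *m v) 0 0.

Lemma bformE M u v : bform M u v = \sum_k \sum_l u k 0 * M k l * v l 0.
Proof.
rewrite /bform mxE; under eq_bigr do rewrite mxE big_distrl /=.
rewrite exchange_big /=; apply: eq_bigr => k _; apply: eq_bigr => l _.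
by rewrite !mxE.
Qed.

Lemma bformDl M u v w : bform M (u + v) w = bform M u w + bform M v w.
Proof. by rewrite /bform linearD /= !mulmxDl mxE. Qed.

Lemma bformDr M u v w : bform M w (u + v) = bform M w u + bform M w v.
Proof. by rewrite /bform mulmxDr mxE. Qed.

Lemma bformZl M a u w : bform M (a *: u) w = a * bform M u w.
Proof. by rewrite /bform linearZ /= -!scalemxAl mxE. Qed.

Lemma bformZr M a u w : bform M w (a *: u) = a * bform M w u.
Proof. by rewrite /bform -!scalemxAr mxE. Qed.

Lemma bformBl M u v w : bform M (u - v) w = bform M u w - bform M v w.
Proof. by rewrite bformDl -scaleN1r bformZl mulN1r. Qed.

Lemma bformBr M u v w : bform M w (u - v) = bform M w u - bform M w v.
Proof. by rewrite bformDr -scaleN1r bformZr mulN1r. Qed.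

Lemma bform0r M u : bform M u 0 = 0.
Proof. by rewrite /bform mulmx0 mxE. Qed.

Lemma bform_sumr M m (F : 'I_m -> 'cV[R]_n) u :
  bform M u (\sum_(j < m) F j) = \sum_(j < m) bform M u (F j).
Proof. by elim/big_rec2: _ => [|j y1 y2 _ <-]; rewrite ?bform0r ?bformDr. Qed.

Lemma bformC M u v : M^T = M -> bform M u v = bform M v u.
Proof.
move=> sM; rewrite /bform -[in LHS](trmxK (u^T *m M *m v)) [in LHS]mxE.
by rewrite !trmx_mul trmxK sM mulmxA.
Qed.

Lemma bform_sqrB M u v k : M^T = M ->
  bform M (u - k *: v) (u - k *: v) =
  bform M u u - 2 * k * bform M u v + k ^+ 2 * bform M v v.
Proof.
by move=> sM; rewrite !bformBl !bformBr !bformZl !bformZr (bformC v u sM); ring.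
Qed.

End BilinearForm.

Section Norms.
Variables (R : realFieldType) (n : nat).
Implicit Types (M : 'M[R]_n) (u v : 'cV[R]_n).

Definition sqnorm v : R := (v^T *m v) 0 0.

Definition mx_l1norm M : R := \sum_k \sum_l `|M k l|.

Lemma sqnormE v : sqnorm v = \sum_k v k 0 ^+ 2.
Proof. by rewrite /sqnorm mxE; apply: eq_bigr => k _; rewrite !mxE expr2. Qed.

Lemma sqnorm_ge0 v : 0 <= sqnorm v.
Proof. by rewrite sqnormE; apply: sumr_ge0 => k _; rewrite sqr_ge0. Qed.

Lemma sqr_entry_le_sqnorm v k : v k 0 ^+ 2 <= sqnorm v.
Proof. by rewrite sqnormE (bigD1 k) //= lerDl sumr_ge0 // => i _; apply: sqr_ge0. Qed.

Lemma mx_l1norm_ge0 M : 0 <= mx_l1norm M.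
Proof. by apply: sumr_ge0 => k _; apply: sumr_ge0. Qed.

Lemma bform_le_l1norm M v : bform M v v <= mx_l1norm M * sqnorm v.
Proof.
rewrite bformE /mx_l1norm !big_distrl /=; apply: ler_sum => k _.
rewrite big_distrl /=; apply: ler_sum => l _.
have vkl : `|v k 0 * v l 0| <= sqnorm v.
  have := sqr_entry_le_sqnorm v k; have := sqr_entry_le_sqnorm v l.
  have := sqr_ge0 (v k 0 - v l 0); have := sqr_ge0 (v k 0 + v l 0).
  by case: (ler0P (v k 0 * v l 0)) => _; nra.
rewrite mulrAC mulrC; apply: le_trans (ler_norm _) _.
by rewrite normrM ler_wpM2l.
Qed.

Lemma norm_lt_sqnorm v e : 0 < e -> sqnorm v < e ^+ 2 -> `|v| < e.
Proof.
move=> e0 hv; rewrite /Num.Def.normr /= mx_normrE; apply: bigmax_lt => // -[k j] _ /=.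
rewrite ord1 -(ltr_pXn2r (n:=2)) ?nnegrE ?normr_ge0 ?ltW //.
rewrite real_normK ?num_real //.
exact: le_lt_trans (sqr_entry_le_sqnorm v k) hv.
Qed.

End Norms.

Section PositiveDefinite.
Variables (R : realFieldType) (n : nat) (P : 'M[R]_n).
Hypothesis posP : posdef P.

Lemma posdef_unitmx : P \in unitmx.
Proof.
case: posP => _ hp; rewrite unitmxE unitfE; apply/negP => /det0P [v vn0 vP].
by have := hp v^T; rewrite trmx_eq0 trmxK vP mul0mx mxE ltxx => /(_ vn0).
Qed.

Lemma posdef_bform_ge0 v : 0 <= bform P v v.
Proof.
case: posP => _ hp; have [->|vn0] := eqVneq v 0; first by rewrite bform0r.
exact/ltW/hp.
Qed.

Lemma posdef_CauchySchwarz u w : bform P u w ^+ 2 <= bform P u u * bform P w w.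
Proof.
case: (posP) => sP hp; have [->|wn0] := eqVneq w 0.
  by rewrite !bform0r expr0n /= mulr0.
have a0 : 0 < bform P w w := hp w wn0.
have := posdef_bform_ge0 (u - (bform P u w / bform P w w) *: w).
rewrite bform_sqrB //.
set a := bform P w w; set b := bform P u w; set c := bform P u u => h.
have e : c - 2 * (b / a) * b + (b / a) ^+ 2 * a = c - b ^+ 2 / a.
  by field; rewrite gt_eqF.
by rewrite e subr_ge0 ler_pdivrMr // in h.
Qed.

(* Cauchy-Schwarz for the inner product of P, applied to v and P^-1 v. *)
Lemma posdef_sqnorm_le v : sqnorm v <= mx_l1norm (invmx P) * bform P v v.
Proof.
case: (posP) => sP _; have Pu := posdef_unitmx.
set w := invmx P *m v.
have Pvw : bform P v w = sqnorm v.
  by rewrite /bform /w mulmxA -[v^T *m P *m invmx P]mulmxA mulmxV // mulmx1.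
have Pww : bform P w w = bform (invmx P) v v.
  rewrite /bform /w trmx_mul trmx_inv sP -[v^T *m invmx P *m P]mulmxA mulVmx //.
  by rewrite mulmx1 mulmxA.
have := posdef_CauchySchwarz v w; rewrite Pvw Pww => cs.
have [s_gt0|s_le0] := ltrP 0 (sqnorm v); last first.
  by apply: le_trans s_le0 _; rewrite mulr_ge0 ?mx_l1norm_ge0 ?posdef_bform_ge0.
rewrite -(ler_pM2r s_gt0) -expr2; apply: le_trans cs _.
by rewrite [_ * bform P v v]mulrC -mulrA ler_wpM2l ?posdef_bform_ge0 ?bform_le_l1norm.
Qed.

End PositiveDefinite.

Lemma bform_le_diff (R : realFieldType) n (M : 'M[R]_n) u v :
  M^T = M -> (forall w, 0 <= bform M w w) ->
  bform M u u <= 2 * bform M (u - v) (u - v) + 2 * bform M v v.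
Proof.
move=> sM psdM; have := psdM (u - 2 *: v).
have := bform_sqrB u v 1 sM; rewrite scale1r => ->.
by rewrite bform_sqrB //; lra.
Qed.

Section Laplacian.
Variables (R : numFieldType) (m : nat) (L : 'M[R]_m).
Hypothesis L_offdiag_ge0 : forall i j, i != j -> 0 <= L i j.
Hypothesis L_row0 : forall i, \sum_j L i j = 0.

Lemma laplacian_diag_le0 j : L j j <= 0.
Proof.
move/eqP: (L_row0 j); rewrite (bigD1 j) //= addr_eq0 => /eqP ->.
by rewrite oppr_le0 sumr_ge0 // => i ji; rewrite L_offdiag_ge0 // eq_sym.
Qed.

(* Each entry of |u| L is nonnegative by the triangle inequality, and they sum
   to 0 because the rows of L do. *)
Lemma left_kernel_norm (u : 'I_m -> R) :
  (forall j, \sum_i u i * L i j = 0) -> forall j, \sum_i `|u i| * L i j = 0.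
Proof.
move=> uL.
have ge0 j : 0 <= \sum_i `|u i| * L i j.
  move/eqP: (uL j); rewrite (bigD1 j) //= addr_eq0 => /eqP uLjj.
  rewrite (bigD1 j) //=.
  have : `|u j * L j j| <= \sum_(i | i != j) `|u i| * L i j.
    rewrite uLjj normrN; apply: le_trans (ler_norm_sum _ _ _) _.
    by apply: ler_sum => i ij; rewrite normrM (ger0_norm (L_offdiag_ge0 ij)).
  by rewrite normrM (ler0_norm (laplacian_diag_le0 j)) mulrN -subr_ge0 opprK addrC.
have sum0 : \sum_j \sum_i `|u i| * L i j = 0.
  by rewrite exchange_big big1 // => i _; rewrite -mulr_sumr L_row0 mulr0.
move=> j; move/psumr_eq0P: sum0 => /(_ (fun j _ => ge0 j)); exact.
Qed.

Lemma irreducible_left_kernel_gt0 (v : 'I_m -> R) i0 : irreducible_mx L ->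
  (forall i, 0 <= v i) -> v i0 != 0 -> (forall j, \sum_i v i * L i j = 0) ->
  forall i, 0 < v i.
Proof.
(* Otherwise the support of v witnesses the reducibility of L. *)
move=> irrL v_ge0 vi0 vL i; rewrite lt_def v_ge0 andbT; apply/negP => /eqP vi.
apply: irrL; exists [set k | v k != 0]; split.
- by apply/set0Pn; exists i0; rewrite inE.
- by apply/eqP => /setP /(_ i); rewrite !inE vi eqxx.
move=> k j; rewrite !inE => vk /negPn /eqP vj.
have kj : k != j by apply: contraNneq vk => ->; rewrite vj.
move: (vL j); rewrite (bigD1 j) //= vj mul0r add0r => /psumr_eq0P.
move=> /(_ (fun l lj => mulr_ge0 (v_ge0 l) (L_offdiag_ge0 lj)) k kj) /eqP.
by rewrite mulf_eq0 (negbTE vk) => /eqP.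
Qed.

Lemma laplacian_pos_left_kernel : (0 < m)%N -> irreducible_mx L ->
  \rank L = (m - 1)%N ->
  exists xi : 'I_m -> R, (forall i, 0 < xi i) /\ (forall j, \sum_i xi i * L i j = 0).
Proof.
move=> m_gt0 irrL rkL.
have rk_ker : \rank (kermx L) != 0%N by rewrite mxrank_ker rkL subKn.
have [r [i0 /eqP ui0]] : exists r i, kermx L r i <> 0.
  apply: contrapT => h; move: rk_ker; rewrite mxrank_eq0 => /eqP; apply.
  apply/matrixP => r i; rewrite [RHS]mxE; apply: contrapT => uri.
  by apply: h; exists r, i.
have uL j : \sum_i kermx L r i * L i j = 0.
  by have := congr1 (fun M : 'M[R]_m => M r j) (mulmx_ker L); rewrite !mxE.
exists (fun i => `|kermx L r i|); split => [|j]; last exact: left_kernel_norm.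
apply: (@irreducible_left_kernel_gt0 _ i0) => //; first by rewrite normr_eq0.
exact: left_kernel_norm.
Qed.

End Laplacian.

Lemma irreducible_bound_propagation (R : realDomainType) m (L : 'M[R]_m) (T : Type)
    (N : T -> 'I_m -> R) (D : T -> 'I_m -> 'I_m -> R) (W : T -> R) i0 :
  irreducible_mx L -> (forall e, 0 <= W e) ->
  (exists K, forall e, N e i0 <= K * W e) ->
  (forall e i j, N e i <= 2 * D e i j + 2 * N e j) ->
  (forall i j, i != j -> L i j != 0 -> exists K, forall e, D e i j <= K * W e) ->
  exists K, forall e i, N e i <= K * W e.
Proof.
(* Otherwise the nodes where N is unbounded witness the reducibility of L. *)
move=> irrL W_ge0 Ni0 N_le D_le.
pose bounded i := exists K, forall e, N e i <= K * W e.
have all_bounded i : bounded i.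
  apply: contrapT => not_bounded; apply: irrL.
  exists [set i | ~~ `[< bounded i >]]; split.
  - by apply/set0Pn; exists i; rewrite inE; apply/negP => /asboolP.
  - by apply/eqP => /setP /(_ i0); rewrite !inE => /negP; apply; apply/asboolP.
  move=> k j; rewrite !inE => /negP k_unb /negPn /asboolP [Kj hKj].
  have kj : k != j by apply: contra_not_neq k_unb => ->; apply/asboolP; exists Kj.
  apply: contrapT => /eqP Lkj; have [Kkj hKkj] := D_le k j kj Lkj.
  apply: k_unb; apply/asboolP; exists (2 * Kkj + 2 * Kj) => e.
  apply: le_trans (N_le e k j) _; rewrite [leRHS]mulrDl -!mulrA.
  by apply: lerD; apply: ler_wpM2l.
have [K hK] := choice all_bounded.
exists (\sum_i `|K i|) => e i; apply: le_trans (hK i e) _.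
apply: ler_wpM2r => //; apply: le_trans (ler_norm _) _.
by rewrite (bigD1 i) //= lerDl sumr_ge0.
Qed.

Section DirichletEnergy.
Variables (R : comPzRingType) (n m : nat) (M : 'M[R]_n) (L : 'M[R]_m).
Variable xi : 'I_m -> R.

Definition dirichlet_energy (e : 'I_m -> 'cV[R]_n) : R :=
  \sum_i \sum_j xi i * L i j * bform M (e i - e j) (e i - e j).

Lemma dirichlet_energyE e : M^T = M ->
  (forall i, \sum_j L i j = 0) -> (forall j, \sum_i xi i * L i j = 0) ->
  dirichlet_energy e = - 2 * \sum_i \sum_j xi i * L i j * bform M (e i) (e j).
Proof.
move=> sM L_row0 xiL.
have sqrB i j : bform M (e i - e j) (e i - e j) =
    bform M (e i) (e i) + bform M (e j) (e j) - 2 * bform M (e i) (e j).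
  by have := bform_sqrB (e i) (e j) 1 sM; rewrite scale1r => ->; ring.
have rows : \sum_i \sum_j xi i * L i j * bform M (e i) (e i) = 0.
  by apply: big1 => i _; rewrite -mulr_suml -mulr_sumr L_row0 mulr0 mul0r.
have cols : \sum_i \sum_j xi i * L i j * bform M (e j) (e j) = 0.
  by rewrite exchange_big big1 // => j _; rewrite -mulr_suml xiL mul0r.
rewrite /dirichlet_energy (eq_bigr (fun i =>
    \sum_j xi i * L i j * bform M (e i) (e i) +
    \sum_j xi i * L i j * bform M (e j) (e j) -
    2 * \sum_j xi i * L i j * bform M (e i) (e j))); last first.
  move=> i _; rewrite mulr_sumr -big_split -sumrB /=.
  by apply: eq_bigr => j _; rewrite sqrB; ring.
by rewrite sumrB big_split /= rows cols add0r sub0r mulNr mulr_sumr.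
Qed.

End DirichletEnergy.

Section DirichletEnergyBounds.
Variables (R : realDomainType) (n m : nat) (M : 'M[R]_n) (L : 'M[R]_m).
Variables (xi : 'I_m -> R) (e : 'I_m -> 'cV[R]_n).
Hypothesis M_psd : forall v, 0 <= bform M v v.
Hypothesis L_offdiag_ge0 : forall i j, i != j -> 0 <= L i j.
Hypothesis xi_ge0 : forall i, 0 <= xi i.

Lemma dirichlet_energy_term_ge0 i j :
  0 <= xi i * L i j * bform M (e i - e j) (e i - e j).
Proof.
have [<-|ij] := eqVneq i j; first by rewrite subrr bform0r mulr0.
by rewrite !mulr_ge0 // L_offdiag_ge0.
Qed.

Lemma dirichlet_energy_ge0 : 0 <= dirichlet_energy M L xi e.
Proof.
by apply: sumr_ge0 => i _; apply: sumr_ge0 => j _; apply: dirichlet_energy_term_ge0.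
Qed.

Lemma dirichlet_energy_term_le i j :
  xi i * L i j * bform M (e i - e j) (e i - e j) <= dirichlet_energy M L xi e.
Proof.
have le_sum (F : 'I_m -> R) k : (forall l, 0 <= F l) -> F k <= \sum_l F l.
  by move=> F_ge0; rewrite (bigD1 k) //= lerDl sumr_ge0.
apply: le_trans (le_sum _ j (dirichlet_energy_term_ge0 i)) _.
by apply: le_sum => k; apply: sumr_ge0 => l _; apply: dirichlet_energy_term_ge0.
Qed.

End DirichletEnergyBounds.

Section WeightedLyapunov.
Variables (R : realFieldType) (n m : nat) (P : 'M[R]_n) (xi : 'I_m -> R).
Hypothesis posP : posdef P.
Hypothesis xi_gt0 : forall i, 0 < xi i.

Definition lyapunov (e : 'I_m -> 'cV[R]_n) : R := \sum_j xi j * bform P (e j) (e j).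

Lemma lyapunov_ge0 e : 0 <= lyapunov e.
Proof.
by apply: sumr_ge0 => j _; rewrite mulr_ge0 ?posdef_bform_ge0 ?(ltW (xi_gt0 j)).
Qed.

Lemma lyapunov_le e : lyapunov e <= mx_l1norm P * \sum_j xi j * sqnorm (e j).
Proof.
rewrite mulr_sumr; apply: ler_sum => j _.
by rewrite mulrCA ler_wpM2l ?bform_le_l1norm ?(ltW (xi_gt0 j)).
Qed.

Lemma sqnorm_le_lyapunov e i :
  xi i * sqnorm (e i) <= mx_l1norm (invmx P) * lyapunov e.
Proof.
apply: le_trans (ler_wpM2l (ltW (xi_gt0 i)) (posdef_sqnorm_le posP _)) _.
rewrite mulrCA ler_wpM2l ?mx_l1norm_ge0 // /lyapunov (bigD1 i) //= lerDl.
by apply: sumr_ge0 => j _; rewrite mulr_ge0 ?posdef_bform_ge0 ?(ltW (xi_gt0 j)).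
Qed.

End WeightedLyapunov.

Section PinnedCoupling.
Variables (R : realFieldType) (n m : nat) (A P K Q : 'M[R]_n) (L : 'M[R]_m).
Variables (xi : 'I_m -> R) (i0 : 'I_m) (veps eps : R).
Hypothesis posP : posdef P.
Hypothesis PK : forall u v, bform P u (K *m v) = bform Q u v.
Hypothesis sQ : Q^T = Q.
Hypothesis Q_psd : forall v, 0 <= bform Q v v.
Hypothesis dissipA : forall v, bform P v (A *m v - K *m v) <= - eps * sqnorm v.
Hypothesis irrL : irreducible_mx L.
Hypothesis L_offdiag_ge0 : forall i j, i != j -> 0 <= L i j.
Hypothesis L_row0 : forall i, \sum_j L i j = 0.
Hypothesis xi_gt0 : forall i, 0 < xi i.
Hypothesis xiL : forall j, \sum_i xi i * L i j = 0.
Hypothesis veps_gt0 : 0 < veps.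

(* With K = P^-1 B B^T, [pinned_field c (s t) (x^~ t) i] is the right-hand
   side of the equation for x_i; node i0 is the pinned one. *)
Definition pinned_field (c : R) (s : 'cV[R]_n) (x : 'I_m -> 'cV[R]_n) j : 'cV[R]_n :=
  A *m x j + c *: \sum_k L j k *: (K *m x k)
  - (if j == i0 then (c * veps) *: (x j - s) else 0).

Lemma pinned_fieldD c s y j :
  pinned_field c s (fun k => y k + s) j = pinned_field c 0 y j + A *m s.
Proof.
rewrite /pinned_field addrK subr0 mulmxDr.
under eq_bigr do rewrite mulmxDr scalerDr.
rewrite big_split /= -scaler_suml L_row0 scale0r addr0 [RHS]addrAC.
by congr (_ - _); rewrite addrAC.
Qed.

Definition pinned_energy (e : 'I_m -> 'cV[R]_n) : R :=
  dirichlet_energy Q L xi e + bform P (e i0) (e i0).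

Let xi_ge0 i : 0 <= xi i. Proof. exact/ltW. Qed.

Lemma bform_drift_le v : bform P v (A *m v) <= bform Q v v - eps * sqnorm v.
Proof. by have := dissipA v; rewrite bformBr PK; lra. Qed.

Lemma pinned_energy_ge0 e : 0 <= pinned_energy e.
Proof. by rewrite addr_ge0 ?dirichlet_energy_ge0 ?posdef_bform_ge0. Qed.

Lemma bform_le_pinned_energy :
  exists C, forall e j, bform Q (e j) (e j) <= C * pinned_energy e.
Proof.
apply: (irreducible_bound_propagation (i0 := i0) irrL pinned_energy_ge0).
- exists (mx_l1norm Q * mx_l1norm (invmx P)) => e.
  apply: le_trans (bform_le_l1norm _ _) _; rewrite -mulrA ler_wpM2l ?mx_l1norm_ge0 //.
  apply: le_trans (posdef_sqnorm_le posP _) _; rewrite ler_wpM2l ?mx_l1norm_ge0 //.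
  by rewrite lerDr dirichlet_energy_ge0.
- by move=> e i j; apply: bform_le_diff.
move=> i j ij Lij; have Lij_gt0 : 0 < L i j by rewrite lt_def Lij L_offdiag_ge0.
exists ((xi i * L i j)^-1) => e; rewrite ler_pdivlMl ?mulr_gt0 //.
apply: le_trans (dirichlet_energy_term_le _ Q_psd L_offdiag_ge0 xi_ge0 i j) _.
by rewrite lerDl posdef_bform_ge0.
Qed.

Lemma bform_pinned_fieldE c e :
  2 * \sum_j xi j * bform P (e j) (pinned_field c 0 e j) =
  2 * \sum_j xi j * bform P (e j) (A *m e j)
  - c * (dirichlet_energy Q L xi e + 2 * veps * xi i0 * bform P (e i0) (e i0)).
Proof.
have field_j j : bform P (e j) (pinned_field c 0 e j) =
    bform P (e j) (A *m e j) + c * \sum_k L j k * bform Q (e j) (e k)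
    - (if j == i0 then c * veps * bform P (e j) (e j) else 0).
  rewrite /pinned_field subr0 bformBr bformDr bformZr bform_sumr.
  congr (_ + _ * _ - _); first by apply: eq_bigr => k _; rewrite bformZr PK.
  by case: ifP; rewrite ?bformZr ?bform0r.
have coupling : \sum_j xi j * (c * \sum_k L j k * bform Q (e j) (e k)) =
    c * \sum_j \sum_k xi j * L j k * bform Q (e j) (e k).
  rewrite mulr_sumr; apply: eq_bigr => j _; rewrite mulrCA; congr (c * _).
  by rewrite mulr_sumr; apply: eq_bigr => k _; rewrite mulrA.
have pin : \sum_j xi j * (if j == i0 then c * veps * bform P (e j) (e j) else 0) =
    xi i0 * (c * veps * bform P (e i0) (e i0)).
  by rewrite (bigD1 i0) //= eqxx big1 ?addr0 // => j /negbTE ->; rewrite mulr0.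
under eq_bigr do rewrite field_j mulrBr mulrDr.
rewrite sumrB big_split /= coupling pin (dirichlet_energyE e sQ L_row0 xiL).
ring.
Qed.

Lemma pinned_field_dissipative : exists c0, forall c, c0 <= c -> forall e,
  \sum_j xi j * bform P (e j) (pinned_field c 0 e j) <=
  - eps * \sum_j xi j * sqnorm (e j).
Proof.
(* The drift bound leaves the positive term sum_j xi_j e_j^T Q e_j, which the
   coupling and pinning terms beat once c * min 1 (2 veps xi_i0) >= 2 C sum xi. *)
have [C hC] := bform_le_pinned_energy.
set X := \sum_i xi i; have X_ge0 : 0 <= X by rewrite sumr_ge0.
set mu := Num.min 1 (2 * veps * xi i0).
have mu_gt0 : 0 < mu by rewrite lt_min ltr01 !mulr_gt0.
exists (2 * X * `|C| / mu) => c c0_le_c e.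
have c_ge0 : 0 <= c.
  by apply: le_trans _ c0_le_c; apply: divr_ge0 (ltW mu_gt0); rewrite !mulr_ge0.
have gain : 2 * X * `|C| <= c * mu by rewrite -ler_pdivrMr.
have drift : \sum_j xi j * bform P (e j) (A *m e j) <=
    \sum_j xi j * bform Q (e j) (e j) - eps * \sum_j xi j * sqnorm (e j).
  rewrite mulr_sumr -sumrB; apply: ler_sum => j _.
  by rewrite mulrCA -mulrBr ler_wpM2l ?bform_drift_le.
have coupling : 2 * \sum_j xi j * bform Q (e j) (e j) <=
    c * (dirichlet_energy Q L xi e + 2 * veps * xi i0 * bform P (e i0) (e i0)).
  have W_ge0 := pinned_energy_ge0 e.
  apply: le_trans (_ : c * mu * pinned_energy e <= _); last first.
    rewrite -mulrA ler_wpM2l // mulrDr lerD ?ler_piMl ?ge_min ?lexx ?orbT //.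
      exact: dirichlet_energy_ge0.
    by rewrite ler_wpM2r ?posdef_bform_ge0 ?ge_min ?lexx ?orbT.
  apply: le_trans (_ : 2 * X * `|C| * pinned_energy e <= _); last exact: ler_wpM2r.
  rewrite -!mulrA ler_wpM2l // mulr_suml; apply: ler_sum => j _.
  rewrite ler_wpM2l //; apply: le_trans (hC e j) _.
  by rewrite ler_wpM2r ?ler_norm.
have := bform_pinned_fieldE c e; lra.
Qed.

End PinnedCoupling.

Local Open Scope classical_set_scope.
Local Open Scope ring_scope.

Section LyapunovDecay.
Variable R : realType.

Lemma is_derive_sum_fun m (h : 'I_m -> R -> R) (dh : 'I_m -> R) (t : R) :
  (forall i, is_derive t 1 (h i) (dh i)) ->
  is_derive t 1 (fun u => \sum_i h i u) (\sum_i dh i).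
Proof. by move=> hd; rewrite -fct_sumE; apply: is_derive_sum. Qed.

Lemma is_derive_entry m n (f : R -> 'M[R]_(m, n)) (t : R) i j :
  derivable f t 1 -> is_derive t 1 (fun u => f u i j) (derive1 f t i j).
Proof.
move=> df; rewrite derive1E derive_mx // mxE.
by apply: derivableP; move/derivable_mxP: df; apply.
Qed.

Lemma is_derive_bform n (M : 'M[R]_n) (f g : R -> 'cV[R]_n) (t : R) :
  derivable f t 1 -> derivable g t 1 ->
  is_derive t 1 (fun u => bform M (f u) (g u))
    (bform M (derive1 f t) (g t) + bform M (f t) (derive1 g t)).
Proof.
move=> df dg; under [fun u => _]funext do rewrite bformE.
rewrite !bformE -big_split /=; apply: is_derive_sum_fun => k.
rewrite -big_split /=; apply: is_derive_sum_fun => l.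
have hd := is_deriveM (is_deriveM (is_derive_entry k 0 df) (is_derive_cst (M k l) t 1))
  (is_derive_entry l 0 dg).
have -> : (fun u => f u k 0 * M k l * g u l 0) =
  (fun u => f u k 0) * cst (M k l) * (fun u => g u l 0) by [].
apply: is_derive_eq hd _; rewrite /= scaler0 add0r -![_ *: _]/(_ * _).
by rewrite (_ : ((fun u => f u k 0) * cst (M k l)) t = f t k 0 * M k l) //; ring.
Qed.

Lemma nonneg_decay_cvg0 (V : R -> R) (d : R) : 0 < d ->
  (forall t, derivable V t 1) -> (forall t, 0 <= V t) ->
  (forall t, derive1 V t <= - d * V t) -> V @ +oo --> 0.
Proof.
move=> d_gt0 dV V_ge0 V'_le.
have V_cont a b : {within `[a, b], continuous V}.
  apply: continuous_subspaceT => x.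
  exact/differentiable_continuous/derivable1_diffP.
have MVT a b : a <= b -> exists2 c, c \in `[a, b] & V b - V a = derive1 V c * (b - a).
  move=> ab; apply: MVT_segment ab _ (V_cont a b) => x _.
  by rewrite derive1E; apply: derivableP.
have V_nincr x y : x <= y -> V y <= V x.
  move=> xy; rewrite -subr_le0; have [c _ ->] := MVT _ _ xy.
  rewrite mulr_le0_ge0 ?subr_ge0 //; apply: le_trans (V'_le c) _.
  by rewrite mulNr oppr_le0 mulr_ge0 ?V_ge0 ?ltW.
have V_small e : 0 < e -> exists T, V T < e.
  move=> e_gt0; apply: contrapT => /forallNP V_big.
  have V_ge t : e <= V t by rewrite leNgt; apply/negP/V_big.
  pose T := V 0 / (d * e) + 1.
  have T_ge0 : 0 <= T by rewrite addr_ge0 // divr_ge0 // mulr_ge0 // ltW.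
  have [c _ VT] := MVT _ _ T_ge0.
  have : V T - V 0 <= - (d * e) * T.
    rewrite VT subr0 ler_wpM2r // (le_trans (V'_le c)) // !mulNr lerN2.
    by rewrite ler_wpM2l ?V_ge ?ltW.
  have -> : - (d * e) * T = - V 0 - d * e.
    by rewrite /T; field; rewrite !gt_eqF.
  by have := V_ge0 T; have := mulr_gt0 d_gt0 e_gt0; lra.
apply/cvgr0Pnorm_lt => e e_gt0; have [T VT] := V_small e e_gt0.
exists T; split; first exact: num_real.
by move=> t Tt; rewrite ger0_norm // (le_lt_trans (V_nincr _ _ (ltW Tt))).
Qed.

Lemma is_derive_lyapunov n m (P : 'M[R]_n) (xi : 'I_m -> R)
    (e : 'I_m -> R -> 'cV[R]_n) (t : R) :
  P^T = P -> (forall j, derivable (e j) t 1) ->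
  is_derive t 1 (fun u => lyapunov P xi (fun j => e j u))
    (2 * \sum_j xi j * bform P (e j t) (derive1 (e j) t)).
Proof.
move=> sP de; rewrite mulr_sumr; apply: is_derive_sum_fun => j.
have hd := is_deriveZ (xi j) (is_derive_bform P (de j) (de j)).
rewrite (_ : (fun u => _) = xi j *: (fun u => bform P (e j u) (e j u))) //.
by apply: is_derive_eq hd _; rewrite (bformC _ _ sP) /GRing.scale /=; ring.
Qed.

Lemma weighted_lyapunov_cvg0 n m (P : 'M[R]_n) (xi : 'I_m -> R) (eps : R)
    (F : ('I_m -> 'cV[R]_n) -> 'I_m -> 'cV[R]_n) (e : 'I_m -> R -> 'cV[R]_n) :
  posdef P -> (forall i, 0 < xi i) -> 0 < eps ->
  (forall v, \sum_j xi j * bform P (v j) (F v j) <=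
             - eps * \sum_j xi j * sqnorm (v j)) ->
  (forall j t, derivable (e j) t 1 /\ derive1 (e j) t = F (fun k => e k t) j) ->
  forall i, e i @ +oo --> (0 : 'cV[R]_n).
Proof.
move=> posP xi_gt0 eps_gt0 F_diss e_sol i.
pose V t := lyapunov P xi (fun j => e j t).
have dV (t : R) :
    is_derive t 1 V (2 * \sum_j xi j * bform P (e j t) (F (fun k => e k t) j)).
  under eq_bigr do rewrite -(proj2 (e_sol _ t)).
  by apply: is_derive_lyapunov posP.1 _ => j; case: (e_sol j t).
pose rate := 2 * eps / (mx_l1norm P + 1).
have V_cvg : V @ +oo --> 0.
  have l1_gt0 : 0 < mx_l1norm P + 1 by rewrite ltr_wpDl ?mx_l1norm_ge0.
  apply: (@nonneg_decay_cvg0 _ rate); first by rewrite divr_gt0 ?mulr_gt0.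
  - by move=> t; have [] := dV t.
  - by move=> t; apply: lyapunov_ge0.
  move=> t; have dVt := dV t; rewrite derive1E derive_val.
  set S := \sum_j xi j * sqnorm (e j t).
  have S_ge0 : 0 <= S.
    by apply: sumr_ge0 => j _; rewrite mulr_ge0 ?sqnorm_ge0 ?(ltW (xi_gt0 j)).
  have VS : V t <= (mx_l1norm P + 1) * S.
    by apply: le_trans (lyapunov_le P xi_gt0 _) _; rewrite ler_wpM2r // lerDl.
  have rateV : rate * V t <= 2 * eps * S.
    rewrite /rate mulrAC ler_pdivrMr // -[leRHS]mulrA.
    by rewrite ler_wpM2l ?mulr_ge0 ?(ltW eps_gt0) // mulrC.
  by have := F_diss (fun k => e k t); rewrite -/S; lra.
apply/cvgr0Pnorm_lt => r r_gt0.
set k := mx_l1norm (invmx P).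
have k1_gt0 : 0 < k + 1 by rewrite ltr_wpDl ?mx_l1norm_ge0.
have bound_gt0 : 0 < r ^+ 2 * xi i / (k + 1) by rewrite divr_gt0 ?mulr_gt0 ?exprn_gt0.
move/cvgr0Pnorm_lt: V_cvg => /(_ _ bound_gt0); apply: filterS => t.
rewrite ger0_norm ?lyapunov_ge0 // ltr_pdivlMr // => Vt.
apply: (@norm_lt_sqnorm R) => //; rewrite -(ltr_pM2l (xi_gt0 i)).
have := sqnorm_le_lyapunov posP xi_gt0 (fun j => e j t) i.
move: Vt; rewrite /V -/k; have := lyapunov_ge0 posP xi_gt0 (fun j => e j t); lra.
Qed.

End LyapunovDecay.

Theorem proposition10 (R : realType) (n p m : nat)
  (A : 'M[R]_n) (B : 'M[R]_(n, p)) (P : 'M[R]_n) (L : 'M[R]_m)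
  (veps : R) (s : R -> 'cV[R]_n) :
  controllable A B ->
  posdef P ->
  (exists eps : R, 0 < eps /\
     forall x y : 'cV[R]_n,
       ((x - y)^T *m P *m (A *m (x - y) - invmx P *m B *m B^T *m (x - y)))
         ord0 ord0 <= - eps * ((x - y)^T *m (x - y)) ord0 ord0) ->
  (0 < m)%N ->
  irreducible_mx L ->
  \rank L = (m - 1)%N ->
  (forall i j : 'I_m, i != j -> 0 <= L i j) ->
  (forall i : 'I_m, \sum_(j < m) L i j = 0) ->
  0 < veps ->
  (forall t : R, derivable s t 1 /\ derive1 s t = A *m s t) ->
  exists c0 : R, forall c : R, c0 <= c ->
    forall x : 'I_m -> R -> 'cV[R]_n,
      (forall (i : 'I_m) (t : R),
         derivable (x i) t 1 /\
         derive1 (x i) t =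
           A *m x i t
           + c *: (\sum_(j < m) L i j *: (invmx P *m B *m B^T *m x j t))
           - (if (nat_of_ord i == 0)%N then (c * veps) *: (x i t - s t)
              else 0)) ->
      forall i : 'I_m, (fun t => x i t - s t) @ +oo --> (0 : 'cV[R]_n).
Proof.
(* Controllability only serves, in the paper, to construct P. *)
move=> _ posP [eps [eps_gt0 dissip]] m_gt0 irrL rkL L_offdiag_ge0 L_row0 veps_gt0 s_sol.
have [xi [xi_gt0 xiL]] := laplacian_pos_left_kernel L_offdiag_ge0 L_row0 m_gt0 irrL rkL.
pose i0 := Ordinal m_gt0; pose K := invmx P *m B *m B^T; pose Q := B *m B^T.
have PK u v : bform P u (K *m v) = bform Q u v.
  by rewrite /bform /K /Q !mulmxA mulmxK ?posdef_unitmx.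
have sQ : Q^T = Q by rewrite /Q trmx_mul trmxK.
have Q_psd v : 0 <= bform Q v v.
  rewrite (_ : bform Q v v = sqnorm (B^T *m v)) ?sqnorm_ge0 //.
  by rewrite /bform /sqnorm trmx_mul trmxK !mulmxA.
have dissipA v : bform P v (A *m v - K *m v) <= - eps * sqnorm v.
  by have := dissip v 0; rewrite subr0.
have [c0 c0_diss] := pinned_field_dissipative i0 posP PK sQ Q_psd dissipA irrL
  L_offdiag_ge0 L_row0 xi_gt0 xiL veps_gt0.
exists c0 => c c0_le_c x x_sol i.
apply: (weighted_lyapunov_cvg0 posP xi_gt0 eps_gt0 (c0_diss c c0_le_c)
  (e := fun j t => x j t - s t)) => j t.
have [dxj x'j] := x_sol j t; have [ds s'] := s_sol t.
split; first exact: derivableB.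
rewrite derive1E deriveB // -!derive1E x'j s'; apply: (addIr (A *m s t)).
rewrite -(pinned_fieldD A K i0 veps L_row0) subrK.
(* [j == i0] reduces to [nat_of_ord j == 0]. *)
rewrite (_ : (fun k => x k t - s t + s t) = x^~ t) //.
by apply: funext => k; rewrite subrK.
Qed.
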